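(* For every $n\ge 1$ and every $\pi\in S_n$, the permutation $\pi$ is $(n-1)$-stack-sortable under $s_{1\dot{2}}$, i.e. $s_{1\dot{2}}^{\,n-1}(\pi)=12\cdots n$.
   Context: The $1\dot{2}$-avoiding stack-sorting map $s_{1\dot{2}}$ is defined as follows. Start with the input $\pi$ and an empty stack. Repeat the following step until both the input and the stack are empty: - If input remains, and either the stack is empty or the next input entry is smaller than the entry at the bottom of the stack, push the next input entry onto the top of the stack. - Otherwise, pop the top entry of the stack and append it to the output. The output word is $s_{1\dot{2}}(\pi)$. For an integer $t\ge 0$, a permutation $\pi\in S_n$ is called $t$-stack-sortable (under $s_{1\dot{2}}$) if $s_{1\dot{2}}^{\,t}(\pi)$, the $t$-fold iterate applied to $\pi$, equals the identity $12\cdots n$. *)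

From mathcomp Require Import all_boot.
Set Implicit Arguments. Unset Strict Implicit. Unset Printing Implicit Defensive.

(* The 1(dot 2)-avoiding stack-sorting map, simulated step by step.
   Stack is a list with its TOP at the head; the BOTTOM is [last]. *)

(* one step of the machine on (input, stack, reversed output) *)
Definition s12_step (c : seq nat * seq nat * seq nat) : seq nat * seq nat * seq nat :=
  let: (inp, st, out) := c in
  match inp, st with
  | x :: inp', [::] => (inp', [:: x], out)
  | x :: inp', y :: st' =>
      if x < last y st' then (inp', x :: st, out)
      else (inp, st', y :: out)
  | [::], y :: st' => (inp, st', y :: out)
  | [::], [::] => c
  end.

(* Each step either consumes an input entry or pops one, so 2 * size steps
   empty both input and stack exactly. *)
Definition s12 (p : seq nat) : seq nat :=
  let: (_, _, out) := iter (2 * size p) s12_step (p, [::], [::]) in rev out.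

Definition is_perm (n : nat) (p : seq nat) : bool := perm_eq p (iota 1 n).

Definition t_stack_sortable (t : nat) (p : seq nat) : Prop :=
  iter t s12 p = iota 1 (size p).

Example ex1 : s12 [:: 2; 3; 1] = [:: 2; 1; 3]. Proof. reflexivity. Qed.
Example ex2 : s12 [:: 3; 1; 2] = [:: 2; 1; 3]. Proof. reflexivity. Qed.
Example ex3 : iter 3 s12 [:: 4; 3; 2; 1] = [:: 1; 2; 3; 4]. Proof. reflexivity. Qed.
Example ex4 : all (fun p => iter 3 s12 p == iota 1 4) (permutations (iota 1 4)). Proof. reflexivity. Qed.

From mathcomp Require Import all_boot.
From mathcomp Require Import zify.
Set Implicit Arguments. Unset Strict Implicit. Unset Printing Implicit Defensive.

(* Since an entry is pushed exactly when it is smaller than the bottom of the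
   stack, the bottom only changes when the stack is emptied: s12 cuts its
   input before every left-to-right maximum and reverses each block.
   Now let q be a permutation of 1..m+1 and p = q ++ [m+2, ..., m+k+1].
   The entry m+1 is a left-to-right maximum of q whose block is all of q
   after it, and every later entry is a block by itself; hence s12 p is a
   permutation of 1..m followed by [m+1, ..., m+k+1].  Starting from m+1 = n,
   n-1 passes therefore leave the permutation [1] followed by [2, ..., n]. *)

(* [s12_run b st p]: output of the machine on input [p] when the stack holds
   [st] (top first) and has bottom entry [b]. *)
Fixpoint s12_run (b : nat) (st p : seq nat) : seq nat :=
  if p is x :: p' then
    if x < b then s12_run b (x :: st) p' else st ++ s12_run x [:: x] p'
  else st.

Definition s12_fun (p : seq nat) : seq nat :=
  if p is x :: p' then s12_run x [:: x] p' else [::].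

Lemma iter_s12_step_halted k out :
  iter k s12_step ([::], [::], out) = ([::], [::], out).
Proof. by elim: k => //= k ->. Qed.

Lemma iter_s12_step_pop st y out inp :
  (if inp is x :: _ then last y st <= x else true) ->
  iter (size st).+1 s12_step (inp, y :: st, out) =
    (inp, [::], rev (y :: st) ++ out).
Proof.
elim: st y out inp => [|z st IH] y out inp pop_ok.
  by case: inp pop_ok => [|x inp] //= pop_ok; rewrite ltnNge pop_ok.
rewrite iterSr.
have -> : s12_step (inp, y :: z :: st, out) = (inp, z :: st, y :: out).
  by case: inp pop_ok => [|x inp] //= pop_ok; rewrite ltnNge pop_ok.
by rewrite IH // [rev (y :: _)]rev_cons cat_rcons.
Qed.

Lemma iter_s12_step_run inp y st out k :
  2 * size inp + size (y :: st) <= k ->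
  iter k s12_step (inp, y :: st, out) =
    ([::], [::], rev (s12_run (last y st) (y :: st) inp) ++ out).
Proof.
elim: inp y st out k => [|x inp IH] y st out k /= enough_steps.
  have -> : k = (k - (size st).+1) + (size st).+1 by lia.
  by rewrite iterD iter_s12_step_pop // iter_s12_step_halted.
have [x_lt|x_ge] := ltnP x (last y st).
  have -> : k = k.-1.+1 by lia.
  by rewrite iterSr /= x_lt IH //=; lia.
have -> : k = (k - (size st).+1).-1.+1 + (size st).+1 by lia.
rewrite iterD iter_s12_step_pop // iterSr /= IH /=; last by lia.
by rewrite -cat_cons rev_cat catA.
Qed.

Lemma s12E p : s12 p = s12_fun p.
Proof.
case: p => [|x p] //; rewrite /s12.
have -> : 2 * size (x :: p) = (2 * size p).+2 by rewrite /=; lia.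
by rewrite iterSr iter_s12_step_run /= ?cats0 ?revK //; lia.
Qed.

Lemma s12_run_small b st q :
  all (fun u => u < b) q -> s12_run b st q = catrev q st.
Proof. by elim: q st => [|y q IH] st //= /andP[-> /IH]. Qed.

Lemma perm_s12_run b st p : perm_eq (s12_run b st p) (st ++ p).
Proof.
elim: p b st => [|y p IH] b st /=; first by rewrite cats0.
case: (y < b); last by rewrite perm_cat2l.
by apply: perm_trans (IH _ _) _; rewrite -cat1s (perm_catCA [:: y] st p).
Qed.

Lemma perm_s12_fun p : perm_eq (s12_fun p) p.
Proof. by case: p => [|x p] //=; apply: perm_s12_run. Qed.

Lemma s12_run_cat_max b st q x s : all (fun u => u < x) (b :: q) ->
  s12_run b st (q ++ x :: s) = s12_run b st q ++ s12_run x [:: x] s.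
Proof.
elim: q b st => [|y q IH] b st /= /andP[b_lt q_lt].
  by rewrite ltnNge ltnW.
case/andP: q_lt => y_lt q_lt.
by case: (y < b); rewrite IH /= ?b_lt ?y_lt // catA.
Qed.

Lemma s12_fun_cat_max q x s : all (fun u => u < x) q ->
  s12_fun (q ++ x :: s) = s12_fun q ++ s12_run x [:: x] s.
Proof. by case: q => [|y q] //= q_lt; rewrite s12_run_cat_max. Qed.

Lemma s12_run_iota a k b st :
  b < a -> s12_run b st (iota a k) = st ++ iota a k.
Proof.
elim: k a b st => [|k IH] a b st b_lt /=; first by rewrite cats0.
by rewrite ltnNge (ltnW b_lt) /= IH.
Qed.

Lemma s12_run_small_iota b st q a k : all (fun u => u < b) q -> b < a ->
  s12_run b st (q ++ iota a k) = catrev q st ++ iota a k.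
Proof.
move=> q_lt b_lt; case: k => [|k]; first by rewrite !cats0 s12_run_small.
rewrite /= s12_run_cat_max ?s12_run_iota ?s12_run_small //= b_lt.
by apply: sub_all q_lt => u; lia.
Qed.

Lemma s12_fun_fixes_next m q k : perm_eq q (iota 1 m.+1) ->
  exists2 q', s12_fun (q ++ iota m.+2 k) = q' ++ iota m.+1 k.+1
            & perm_eq q' (iota 1 m).
Proof.
move=> q_perm.
have max_in_q : m.+1 \in q by rewrite (perm_mem q_perm) mem_iota; lia.
case/splitPr: max_in_q q_perm => q1 q2 q_perm.
have q12_perm : perm_eq (q1 ++ q2) (iota 1 m).
  rewrite -(perm_cat2r [:: m.+1]).
  have -> : iota 1 m ++ [:: m.+1] = iota 1 m.+1 by rewrite -[m.+1]addn1 iotaD add1n addn1.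
  by apply: perm_trans q_perm; rewrite -catA perm_cat2l perm_catC.
have : all (fun u => u < m.+1) (q1 ++ q2).
  by apply/allP => u; rewrite (perm_mem q12_perm) mem_iota; lia.
rewrite all_cat => /andP[q1_lt q2_lt].
exists (s12_fun q1 ++ rev q2).
  rewrite -catA cat_cons s12_fun_cat_max // s12_run_small_iota // catrevE.
  by rewrite -!catA.
by apply: perm_trans q12_perm; rewrite perm_cat ?perm_s12_fun ?perm_rev.
Qed.

Lemma iter_s12_fixes_suffix j m q k : perm_eq q (iota 1 (m + j)) ->
  exists2 q', iter j s12 (q ++ iota (m + j).+1 k) = q' ++ iota m.+1 (j + k)
            & perm_eq q' (iota 1 m).
Proof.
elim: j m q k => [|j IH] m q k; first by rewrite addn0 => q_perm; exists q.
rewrite -addSnnS iterS => /(IH _ _ k)[q'' -> /(s12_fun_fixes_next (j + k))].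
by case=> q' q'_def q'_perm; exists q'; rewrite // s12E q'_def addSn.
Qed.

Theorem lemma3p2 (n : nat) (p : seq nat) :
  1 <= n -> is_perm n p -> t_stack_sortable n.-1 p.
Proof.
case: n => [|n] // _ p_perm.
rewrite /t_stack_sortable (perm_size p_perm) size_iota.
have [q] := @iter_s12_fixes_suffix n 1 p 0 p_perm.
rewrite cats0 addn0 => -> /perm_small_eq -> //.
Qed.
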